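(* Let $0<\alpha<\pi/4$, $\beta=\pi/4$, and let $F,G_1,G_2$, $X_{\pm\pm}$, $s_{\max}$, $v$ be as in the context. Let $\theta(\alpha)=\arcsin\left(\frac{-2\sqrt2\sin\alpha\cos\alpha}{1+\cos^2\alpha}\right)$ and write $c=\cos\theta(\alpha)$, $\sigma=\sin\theta(\alpha)$. Then $$e^{v(s_{\max})X_{++}}=\begin{pmatrix}0&-1&0\\ c&0&\sigma\\ -\sigma&0&c\end{pmatrix},\quad e^{v(s_{\max})X_{+-}}=\begin{pmatrix}0&-c&-\sigma\\ 1&0&0\\ 0&-\sigma&c\end{pmatrix},$$ $$e^{v(s_{\max})X_{--}}=\begin{pmatrix}0&-1&0\\ c&0&-\sigma\\ \sigma&0&c\end{pmatrix},\quad e^{v(s_{\max})X_{-+}}=\begin{pmatrix}0&-c&\sigma\\ 1&0&0\\ 0&\sigma&c\end{pmatrix}.$$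
   Context: $F=\cos\alpha\begin{pmatrix}0&-1&0\\1&0&0\\0&0&0\end{pmatrix}$, $G_1=\sin\alpha\sin\beta\begin{pmatrix}0&0&0\\0&0&-1\\0&1&0\end{pmatrix}$, $G_2=\sin\alpha\cos\beta\begin{pmatrix}0&0&-1\\0&0&0\\1&0&0\end{pmatrix}$, and $X_{ab}=F+aG_1+bG_2$ for $a,b\in\{+1,-1\}$ (written $X_{++},X_{+-},X_{--},X_{-+}$). $s_{\max}=\arccos\left(-\frac{\sin^2\alpha}{1+\cos^2\alpha}\right)$. For $s\in[0,s_{\max}]$, $v(s)=\arccos\left[\frac{d-A(s)-B(s)-C(s)}{e-A(s)+B(s)}\right]$ with $A(s)=8\cos\alpha\sin^2\alpha\sin s$, $B(s)=2\sin^2(2\alpha)\cos s$, $C(s)=4\sin^4\alpha\cos(2s)$, $d=\sin^2(2\alpha)$, $e=5+2\cos2\alpha+\cos4\alpha$; this is the duration of interior bang arcs of normal extremals of $\dot x=(F+u_1G_1+u_2G_2)x$ on $S^2$ starting from $(0,0,1)$ whose first bang arc has duration $s$. *)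

From HB Require Import structures.
From mathcomp Require Import all_boot all_order all_algebra.
From mathcomp Require Import all_classical all_reals all_analysis.
Set Implicit Arguments. Unset Strict Implicit. Unset Printing Implicit Defensive.
Import Order.TTheory GRing.Theory Num.Theory.
Import numFieldNormedType.Exports.
Local Open Scope classical_set_scope.
Local Open Scope ring_scope.

Section Defs.
Variable R : realType.

Definition expm_partial (A : 'M[R]_3) (N : nat) : 'M[R]_3 :=
  \sum_(k < N) (k`!%:R)^-1 *: (A ^+ k).

Definition is_expm (A M : 'M[R]_3) : Prop :=
  expm_partial A @ \oo --> M.

Definition mat3 (a b c d e f g h i : R) : 'M[R]_3 :=
  \matrix_(p < 3, q < 3)
    nth 0 (nth [::] [:: [:: a; b; c]; [:: d; e; f]; [:: g; h; i]] p) q.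

Definition Fm (alpha : R) : 'M[R]_3 :=
  cos alpha *: mat3 0 (-1) 0  1 0 0  0 0 0.
Definition G1m (alpha beta : R) : 'M[R]_3 :=
  (sin alpha * sin beta) *: mat3 0 0 0  0 0 (-1)  0 1 0.
Definition G2m (alpha beta : R) : 'M[R]_3 :=
  (sin alpha * cos beta) *: mat3 0 0 (-1)  0 0 0  1 0 0.

(* X_{ab} = F + a G1 + b G2, with a, b intended in {+1,-1} *)
Definition Xm (alpha beta a b : R) : 'M[R]_3 :=
  Fm alpha + a *: G1m alpha beta + b *: G2m alpha beta.

Definition smax (alpha : R) : R :=
  acos (- (sin alpha ^+ 2 / (1 + cos alpha ^+ 2))).

Definition vA (alpha s : R) : R := 8 * cos alpha * sin alpha ^+ 2 * sin s.
Definition vB (alpha s : R) : R := 2 * sin (2 * alpha) ^+ 2 * cos s.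
Definition vC (alpha s : R) : R := 4 * sin alpha ^+ 4 * cos (2 * s).
Definition vd (alpha : R) : R := sin (2 * alpha) ^+ 2.
Definition ve (alpha : R) : R := 5 + 2 * cos (2 * alpha) + cos (4 * alpha).

Definition vfun (alpha s : R) : R :=
  acos ((vd alpha - vA alpha s - vB alpha s - vC alpha s)
        / (ve alpha - vA alpha s + vB alpha s)).

Definition theta (alpha : R) : R :=
  asin ((- (2 * Num.sqrt 2 * sin alpha * cos alpha)) / (1 + cos alpha ^+ 2)).

End Defs.

From HB Require Import structures.
From mathcomp Require Import all_boot all_order all_algebra.
From mathcomp Require Import all_classical all_reals all_analysis.
From mathcomp Require Import ring lra.
Set Implicit Arguments. Unset Strict Implicit. Unset Printing Implicit Defensive.
Import Order.TTheory GRing.Theory Num.Theory.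
Import numFieldNormedType.Exports.
Local Open Scope ring_scope.

(* For beta = pi/4 each X_ab is the cross-product matrix of the unit vector
   (a sin(alpha)/sqrt 2, -b sin(alpha)/sqrt 2, cos(alpha)), so its exponential
   is a rotation given by Rodrigues' formula
   e^(tK) = 1 + sin(t) K + (1 - cos(t)) K^2.  At s = s_max the quotient in the
   definition of v collapses to cos(s_max), i.e. v(s_max) = s_max, whose cosine
   and sine are rational in cos(alpha); so are cos(theta) and sin(theta), and the
   four identities become identities between rational functions of cos(alpha). *)

Section Rodrigues.
Variable R : realType.

Lemma exprn_cubeN (K : 'M[R]_3) (n : nat) : K ^+ 3 = - K ->
  K ^+ n = ((odd n)%:R * (-1) ^+ n.-1./2) *: K
           - ((~~ odd n)%:R * (-1) ^+ n./2) *: K ^+ 2 + (n == 0)%:R *: (1 + K ^+ 2).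
Proof.
move=> K3; case: n => [|n].
  by rewrite /= !expr0 !mul0r !mul1r scale0r !scale1r add0r addrC addrK.
elim: n => [|n IH].
  by rewrite /= !expr0 expr1 !mul0r mul1r !scale0r subr0 addr0 scale1r.
rewrite exprSr IH /= !scale0r !addr0 mulrBl -!scalerAl -exprSr K3 scalerN opprK.
rewrite negbK /= addrC; congr (_ + _); rewrite -scaleNr; congr (_ *: _).
by rewrite exprS mulN1r mulrN opprK.
Qed.

(* The odd and even parts of the exponential series are the sine and cosine
   series, whose convergence the library provides. *)
Lemma is_expm_cubeN (K : 'M[R]_3) (t : R) : K ^+ 3 = - K ->
  is_expm (t *: K) (sin t *: K - cos t *: K ^+ 2 + (1 + K ^+ 2)).
Proof.
move=> K3.
have term n : (n`!%:R)^-1 *: (t *: K) ^+ n =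
    sin_coeff t n *: K - cos_coeff t n *: K ^+ 2 + (n == 0)%:R *: (1 + K ^+ 2).
  rewrite exprZn (exprn_cubeN n K3) !scalerDr !scalerN !scalerA /=.
  congr (_ *: _ + - (_ *: _) + (_%:A + _ *: _)).
  - by rewrite /sin_coeff /=; ring.
  - by rewrite /cos_coeff /= -exprnP; ring.
  - by case: n => [|n] /=; rewrite ?expr0 ?mulr0 // invr1 !mulr1.
  - by case: n => [|n] /=; rewrite ?expr0 ?mulr0 // invr1 !mulr1.
have partial n : expm_partial (t *: K) n.+1 = series (sin_coeff t) n.+1 *: K
    - series (cos_coeff t) n.+1 *: K ^+ 2 + (1 + K ^+ 2).
  rewrite /expm_partial /series /=.
  under eq_bigr do rewrite term.
  rewrite big_split big_split /= sumrN -!scaler_suml !big_mkord.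
  by congr (_ + _); rewrite big_ord_recl big1 /= ?addr0 ?scale1r.
rewrite /is_expm -cvg_shiftS.
have -> : [sequence expm_partial (t *: K) n.+1]_n = (fun n => series (sin_coeff t) n.+1 *: K
    - series (cos_coeff t) n.+1 *: K ^+ 2 + (1 + K ^+ 2)).
  by apply/funext => n /=; rewrite partial.
apply: cvgD; last exact: cvg_cst.
apply: cvgB; apply: cvgZr_tmp; rewrite (cvg_shiftS (series _)) unlock.
  exact: is_cvg_series_sin_coeff.
exact: is_cvg_series_cos_coeff.
Qed.

End Rodrigues.

Section Mat3.
Variable R : realType.
Implicit Types a b c d e f g h i k : R.

Lemma mat3_add a b c d e f g h i a' b' c' d' e' f' g' h' i' :
  mat3 a b c d e f g h i + mat3 a' b' c' d' e' f' g' h' i' =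
  mat3 (a + a') (b + b') (c + c') (d + d') (e + e') (f + f') (g + g') (h + h') (i + i').
Proof. by apply/matrixP => -[[|[|[|?]]] ?] [[|[|[|?]]] ?]; rewrite !mxE. Qed.

Lemma mat3_scale k a b c d e f g h i : k *: mat3 a b c d e f g h i =
  mat3 (k * a) (k * b) (k * c) (k * d) (k * e) (k * f) (k * g) (k * h) (k * i).
Proof. by apply/matrixP => -[[|[|[|?]]] ?] [[|[|[|?]]] ?]; rewrite !mxE. Qed.

Lemma mat3_opp a b c d e f g h i :
  - mat3 a b c d e f g h i = mat3 (- a) (- b) (- c) (- d) (- e) (- f) (- g) (- h) (- i).
Proof. by apply/matrixP => -[[|[|[|?]]] ?] [[|[|[|?]]] ?]; rewrite !mxE. Qed.

Lemma mat3_one : 1 = mat3 1 0 0 0 1 0 0 0 1 :> 'M[R]_3.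
Proof. by apply/matrixP => -[[|[|[|?]]] ?] [[|[|[|?]]] ?]; rewrite !mxE. Qed.

Lemma mat3_mul a b c d e f g h i a' b' c' d' e' f' g' h' i' :
  mat3 a b c d e f g h i * mat3 a' b' c' d' e' f' g' h' i' =
  mat3 (a * a' + b * d' + c * g') (a * b' + b * e' + c * h') (a * c' + b * f' + c * i')
       (d * a' + e * d' + f * g') (d * b' + e * e' + f * h') (d * c' + e * f' + f * i')
       (g * a' + h * d' + i * g') (g * b' + h * e' + i * h') (g * c' + h * f' + i * i').
Proof.
rewrite -mulmxE; apply/matrixP => p q; rewrite !mxE !big_ord_recl big_ord0 !mxE addr0 /=.
by case: p => [[|[|[|p]]] ?] //; case: q => [[|[|[|q]]] ?] //=; rewrite addrA.
Qed.

Definition skew (x y z : R) : 'M[R]_3 := mat3 0 (- z) y  z 0 (- x)  (- y) x 0.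

Lemma skew_cube x y z : x ^+ 2 + y ^+ 2 + z ^+ 2 = 1 -> skew x y z ^+ 3 = - skew x y z.
Proof.
move=> xyz1; rewrite -[- _]scale1r -xyz1 exprS expr2 /skew !mat3_mul mat3_opp mat3_scale.
by congr mat3; ring.
Qed.

Lemma skew_sqr x y z : x ^+ 2 + y ^+ 2 + z ^+ 2 = 1 ->
  skew x y z ^+ 2 = mat3 (x * x - 1) (x * y) (x * z)  (x * y) (y * y - 1) (y * z)
                         (x * z) (y * z) (z * z - 1).
Proof. by move=> <-; rewrite expr2 /skew mat3_mul; congr mat3; ring. Qed.

Lemma is_expm_skew x y z t : x ^+ 2 + y ^+ 2 + z ^+ 2 = 1 ->
  is_expm (t *: skew x y z)
    (mat3 (cos t + (1 - cos t) * (x * x)) ((1 - cos t) * (x * y) - sin t * z)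
          ((1 - cos t) * (x * z) + sin t * y)
          ((1 - cos t) * (x * y) + sin t * z) (cos t + (1 - cos t) * (y * y))
          ((1 - cos t) * (y * z) - sin t * x)
          ((1 - cos t) * (x * z) - sin t * y) ((1 - cos t) * (y * z) + sin t * x)
          (cos t + (1 - cos t) * (z * z))).
Proof.
move=> xyz1; apply: (eq_ind _ _ (is_expm_cubeN (t := t) (skew_cube xyz1))).
rewrite (skew_sqr xyz1) /skew mat3_one !mat3_scale mat3_opp !mat3_add.
by congr mat3; ring.
Qed.

End Mat3.

Section PiQuarter.
Variable R : realType.

Lemma cos_piquarter_gt0 : 0 < cos (pi / 4 : R).
Proof. by apply: cos_gt0_pihalf; have := @pi_gt0 R; lra. Qed.

Lemma sin_piquarter_cos : sin (pi / 4 : R) = cos (pi / 4).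
Proof.
have := @tan_piquarter R; rewrite /tan => /(congr1 ( *%R^~ (cos (pi / 4)))).
by rewrite divfK ?mul1r // lt0r_neq0 // cos_piquarter_gt0.
Qed.

Lemma cos_piquarter_sqr : cos (pi / 4 : R) ^+ 2 = 2^-1.
Proof.
have := cos2Dsin2 (pi / 4 : R); rewrite sin_piquarter_cos => h.
by apply: (@mulfI _ 2) => //; rewrite divff //; lra.
Qed.

Lemma sqrt2_cos_piquarter : Num.sqrt 2 = 2 * cos (pi / 4 : R).
Proof.
have q0 := cos_piquarter_gt0.
rewrite -[RHS]ger0_norm; last by lra.
by rewrite -sqrtr_sqr exprMn cos_piquarter_sqr; congr Num.sqrt; field.
Qed.

End PiQuarter.

Section ExpXmPiquarter.
Variable R : realType.
Implicit Types alpha a b t : R.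

Lemma one_add_cos_sqr_gt0 alpha : 0 < 1 + cos alpha ^+ 2.
Proof. by apply: (@lt_le_trans _ _ 1) => //; rewrite lerDl sqr_ge0. Qed.

Lemma Xm_piquarter alpha a b : Xm alpha (pi / 4) a b =
  skew (a * sin alpha * cos (pi / 4)) (- (b * sin alpha * cos (pi / 4))) (cos alpha).
Proof.
rewrite /Xm /Fm /G1m /G2m !mat3_scale !mat3_add /skew sin_piquarter_cos.
by congr mat3; ring.
Qed.

Lemma is_expm_Xm_piquarter alpha a b t : a ^+ 2 = 1 -> b ^+ 2 = 1 ->
  cos t = - (1 - cos alpha ^+ 2) / (1 + cos alpha ^+ 2) ->
  sin t = 2 * cos alpha / (1 + cos alpha ^+ 2) ->
  is_expm (t *: Xm alpha (pi / 4) a b)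
   (mat3 0 ((- (a * b) * (1 - cos alpha ^+ 2) - 2 * cos alpha ^+ 2) / (1 + cos alpha ^+ 2))
         (2 * sin alpha * cos (pi / 4) * cos alpha * (a - b) / (1 + cos alpha ^+ 2))
         ((- (a * b) * (1 - cos alpha ^+ 2) + 2 * cos alpha ^+ 2) / (1 + cos alpha ^+ 2))
         0
         (- (2 * sin alpha * cos (pi / 4) * cos alpha * (a + b)) / (1 + cos alpha ^+ 2))
         (2 * sin alpha * cos (pi / 4) * cos alpha * (a + b) / (1 + cos alpha ^+ 2))
         (2 * sin alpha * cos (pi / 4) * cos alpha * (a - b) / (1 + cos alpha ^+ 2))
         ((3 * cos alpha ^+ 2 - 1) / (1 + cos alpha ^+ 2))).
Proof.
move=> a2 b2 cos_t sin_t; rewrite Xm_piquarter.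
have D0 := lt0r_neq0 (one_add_cos_sqr_gt0 alpha).
have q2 := @cos_piquarter_sqr R; have sa2 := sin2cos2 alpha.
move: (cos (pi / 4)) (sin alpha) (cos alpha) q2 sa2 cos_t sin_t D0 => q sa ca q2 sa2 cos_t sin_t D0.
have xx : (a * sa * q) * (a * sa * q) = (1 - ca ^+ 2) / 2.
  by transitivity (a ^+ 2 * sa ^+ 2 * q ^+ 2); [ring | rewrite a2 sa2 q2; field].
have yy : - (b * sa * q) * - (b * sa * q) = (1 - ca ^+ 2) / 2.
  by transitivity (b ^+ 2 * sa ^+ 2 * q ^+ 2); [ring | rewrite b2 sa2 q2; field].
have xy : (a * sa * q) * - (b * sa * q) = - (a * b) * (1 - ca ^+ 2) / 2.
  by transitivity (- (a * b) * sa ^+ 2 * q ^+ 2); [ring | rewrite sa2 q2; field].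
have xyz1 : (a * sa * q) ^+ 2 + (- (b * sa * q)) ^+ 2 + ca ^+ 2 = 1.
  by rewrite !expr2 xx yy; field.
apply: (eq_ind _ _ (is_expm_skew (t := t) xyz1)).
by rewrite xx yy xy cos_t sin_t; congr mat3; field.
Qed.

End ExpXmPiquarter.

Section SwitchingTime.
Variable R : realType.
Implicit Types alpha : R.

Lemma cos_smax alpha : cos (smax alpha) = - (sin alpha ^+ 2 / (1 + cos alpha ^+ 2)).
Proof.
have D0 := one_add_cos_sqr_gt0 alpha.
have r0 : 0 <= sin alpha ^+ 2 / (1 + cos alpha ^+ 2) by rewrite divr_ge0 ?sqr_ge0 ?ltW.
have r1 : sin alpha ^+ 2 / (1 + cos alpha ^+ 2) <= 1.
  by rewrite ler_pdivrMr // mul1r sin2cos2; have := sqr_ge0 (cos alpha); lra.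
by rewrite acosK // in_itv /=; apply/andP; split; lra.
Qed.

Lemma sin_smax alpha : 0 <= cos alpha ->
  sin (smax alpha) = 2 * cos alpha / (1 + cos alpha ^+ 2).
Proof.
move=> ca0; have D0 := one_add_cos_sqr_gt0 alpha.
have s0 : 0 <= sin (smax alpha).
  by rewrite /smax sin_acos ?sqrtr_ge0 // -cos_smax cos_geN1 cos_le1.
rewrite -[LHS]ger0_norm // -sqrtr_sqr sin2cos2 cos_smax sin2cos2.
rewrite (_ : _ - _ = (2 * cos alpha / (1 + cos alpha ^+ 2)) ^+ 2).
  by rewrite sqrtr_sqr ger0_norm // divr_ge0 //; lra.
by field; rewrite lt0r_neq0.
Qed.

Lemma vfun_smax alpha : 0 <= cos alpha -> 3 * cos alpha ^+ 2 != 1 ->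
  vfun alpha (smax alpha) = smax alpha.
Proof.
move=> ca0 ca2; have D0 := lt0r_neq0 (one_add_cos_sqr_gt0 alpha).
have sa2 := sin2cos2 alpha.
have sin2a : sin (2 * alpha) = 2 * sin alpha * cos alpha.
  by rewrite mulr_natl sin_mulr2n; ring.
have cos2a : cos (2 * alpha) = 2 * cos alpha ^+ 2 - 1.
  by rewrite mulr_natl cos_mulr2n; ring.
have cos4a : cos (4 * alpha) = 2 * (2 * cos alpha ^+ 2 - 1) ^+ 2 - 1.
  by rewrite (_ : 4 * alpha = (2 * alpha) *+ 2) ?cos_mulr2n ?cos2a; ring.
have cos2s : cos (2 * smax alpha) = 2 * cos (smax alpha) ^+ 2 - 1.
  by rewrite mulr_natl cos_mulr2n; ring.
have sa4 : sin alpha ^+ 4 = (1 - cos alpha ^+ 2) ^+ 2 by rewrite -sa2; ring.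
have sinca2 : (2 * sin alpha * cos alpha) ^+ 2 = 4 * cos alpha ^+ 2 * (1 - cos alpha ^+ 2).
  by rewrite -sa2; ring.
have den : ve alpha - vA alpha (smax alpha) + vB alpha (smax alpha) =
    4 * (3 * cos alpha ^+ 2 - 1) ^+ 2 / (1 + cos alpha ^+ 2).
  rewrite /ve /vA /vB sin2a cos2a cos4a cos_smax sin_smax // sinca2 sa2.
  by field.
have num : vd alpha - vA alpha (smax alpha) - vB alpha (smax alpha) - vC alpha (smax alpha) =
    - (sin alpha ^+ 2 / (1 + cos alpha ^+ 2)) * (4 * (3 * cos alpha ^+ 2 - 1) ^+ 2 / (1 + cos alpha ^+ 2)).
  rewrite /vd /vA /vB /vC sin2a cos2s cos_smax sin_smax // sinca2 sa4 sa2.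
  by field.
rewrite /vfun num den mulfK //.
by rewrite !mulf_neq0 ?invr_eq0 // subr_eq0.
Qed.

End SwitchingTime.

Section Theta.
Variable R : realType.
Implicit Types alpha : R.

Lemma theta_arg_sqr alpha :
  1 - (- (2 * Num.sqrt 2 * sin alpha * cos alpha) / (1 + cos alpha ^+ 2)) ^+ 2 =
  ((3 * cos alpha ^+ 2 - 1) / (1 + cos alpha ^+ 2)) ^+ 2.
Proof.
have D0 := lt0r_neq0 (one_add_cos_sqr_gt0 alpha).
have sqrt2 : Num.sqrt 2 ^+ 2 = 2 :> R by rewrite sqr_sqrtr.
rewrite expr_div_n exprNn !exprMn sqrt2 sin2cos2.
by field.
Qed.

Lemma theta_arg_itv alpha :
  -1 <= - (2 * Num.sqrt 2 * sin alpha * cos alpha) / (1 + cos alpha ^+ 2) <= 1.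
Proof.
have := sqr_ge0 ((3 * cos alpha ^+ 2 - 1) / (1 + cos alpha ^+ 2)).
rewrite -theta_arg_sqr; move: (_ / _) => w w2.
by apply/andP; split; nra.
Qed.

Lemma sin_theta alpha :
  sin (theta alpha) = - (4 * cos (pi / 4) * sin alpha * cos alpha) / (1 + cos alpha ^+ 2).
Proof.
rewrite /theta asinK; last by rewrite in_itv /= theta_arg_itv.
by rewrite sqrt2_cos_piquarter; congr (- _ / _); ring.
Qed.

Lemma cos_theta alpha : 1 <= 3 * cos alpha ^+ 2 ->
  cos (theta alpha) = (3 * cos alpha ^+ 2 - 1) / (1 + cos alpha ^+ 2).
Proof.
move=> ca2; have D0 := one_add_cos_sqr_gt0 alpha.
rewrite /theta cos_asin ?theta_arg_itv // theta_arg_sqr sqrtr_sqr ger0_norm //.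
by apply: divr_ge0; lra.
Qed.

End Theta.

Lemma cos_sqr_gt_half (R : realType) (alpha : R) : 0 < alpha -> alpha < pi / 4 ->
  0 < cos alpha /\ 1 < 2 * cos alpha ^+ 2.
Proof.
move=> a0 a1; have pi0 := @pi_gt0 R.
have cos2a : 0 < cos (alpha *+ 2).
  by apply: cos_gt0_pihalf; rewrite [alpha *+ 2]mulr2n; apply/andP; split; lra.
split; first by apply: cos_gt0_pihalf; apply/andP; split; lra.
by rewrite cos_mulr2n in cos2a; lra.
Qed.

Theorem lemma11 (R : realType) (alpha : R) :
  0 < alpha -> alpha < pi / 4 ->
  let beta := pi / 4 in
  let t := vfun alpha (smax alpha) in
  let c := cos (theta alpha) in
  let s := sin (theta alpha) in
  [/\ is_expm (t *: Xm alpha beta 1 1)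
        (mat3 0 (-1) 0  c 0 s  (- s) 0 c),
      is_expm (t *: Xm alpha beta 1 (-1))
        (mat3 0 (- c) (- s)  1 0 0  0 (- s) c),
      is_expm (t *: Xm alpha beta (-1) (-1))
        (mat3 0 (-1) 0  c 0 (- s)  s 0 c)
    & is_expm (t *: Xm alpha beta (-1) 1)
        (mat3 0 (- c) s  1 0 0  0 s c)].
Proof.
move=> a0 a1 beta t c s; rewrite {}/beta {}/t {}/c {}/s.
have [ca0 ca2] := cos_sqr_gt_half a0 a1.
have D0 := lt0r_neq0 (one_add_cos_sqr_gt0 alpha).
have v_smax : vfun alpha (smax alpha) = smax alpha by apply: vfun_smax; lra.
have cos_t : cos (vfun alpha (smax alpha)) =
    - (1 - cos alpha ^+ 2) / (1 + cos alpha ^+ 2).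
  by rewrite v_smax cos_smax sin2cos2 mulNr.
have sin_t : sin (vfun alpha (smax alpha)) = 2 * cos alpha / (1 + cos alpha ^+ 2).
  by rewrite v_smax sin_smax // ltW.
rewrite sin_theta cos_theta; last by lra.
have one2 := @expr1n R 2; have mone2 : (-1) ^+ 2 = 1 :> R by rewrite sqrrN expr1n.
split.
- apply: (eq_ind _ _ (is_expm_Xm_piquarter one2 one2 cos_t sin_t)).
  by congr mat3; field; exact: D0.
- apply: (eq_ind _ _ (is_expm_Xm_piquarter one2 mone2 cos_t sin_t)).
  by congr mat3; field; exact: D0.
- apply: (eq_ind _ _ (is_expm_Xm_piquarter mone2 mone2 cos_t sin_t)).
  by congr mat3; field; exact: D0.
- apply: (eq_ind _ _ (is_expm_Xm_piquarter mone2 one2 cos_t sin_t)).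
  by congr mat3; field; exact: D0.
Qed.
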